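(* Let $e$ be an edge of $\mathcal{G}$ such that $v=s(e)$ satisfies $0<|s^{-1}(v)|<\infty$. If $\pi(p_A)(h)=0$ for each $A\in\mathcal{G}^0$ and each $h\in B\setminus B_A$, then $\pi(s_e^* )(h)=0$ for each $h\in B\setminus B_e$. Consequently, if $\mathcal{G}$ has no infinite emitters, the hypothesis ''$\pi(s_e^* )(h)=0$ for each edge $e$ and each $h\in B\setminus B_e$'' is implied by the hypothesis ''$\pi(p_A)(h)=0$ for each $A\in\mathcal{G}^0$ and $h\in B\setminus B_A$''.
   Context: Let $\mathcal{G}=(G^0,\mathcal{G}^1,r,s)$ be an ultragraph (sets $G^0$ of vertices and $\mathcal{G}^1$ of edges, $s:\mathcal{G}^1\to G^0$, $r:\mathcal{G}^1\to P(G^0)\setminus\{\emptyset\}$), and let $\mathcal{G}^0$ be the smallest subset of $P(G^0)$ containing all singletons $\{v\}$, all $r(e)$, and closed under finite unions and intersections. Let $R$ be a unital commutative ring and $L_R(\mathcal{G})$ the ultragraph Leavitt path algebra, generated by $\{s_e,s_e^*:e\in\mathcal{G}^1\}\cup\{p_A:A\in\mathcal{G}^0\}$ with relations $p_\emptyset=0$, $p_Ap_B=p_{A\cap B}$, $p_{A\cup B}=p_A+p_B-p_{A\cap B}$; $p_{s(e)}s_e=s_ep_{r(e)}=s_e$, $p_{r(e)}s_e^*=s_e^*p_{s(e)}=s_e^*$; $s_e^*s_f=\delta_{e,f}p_{r(e)}$; and $p_v=\sum_{s(e)=v}s_es_e^*$ whenever $0<|s^{-1}(v)|<\infty$. Let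 $N$ be an $R$-module and $\pi:L_R(\mathcal{G})\to Hom_R(N)$ an $R$-algebra homomorphism. Set $N_e=\pi(s_es_e^* )(N)$ for $e\in\mathcal{G}^1$ and $N_A=\pi(p_A)(N)$ for $A\in\mathcal{G}^0$. Suppose $\pi$ is permutative, i.e. there are bases $B$ of $N$, $B_v$ of $N_v$, $B_{r(e)}$ of $N_{r(e)}$ and $B_e$ of $N_e$ ($v\in G^0$, $e\in\mathcal{G}^1$) with $B_v\subseteq B$, $B_{r(e)}\subseteq B$, $B_v\subseteq B_{r(e)}$ for $v\in r(e)$, $B_e\subseteq B_{s(e)}$, and $\pi(s_e)(B_{r(e)})=B_e$. For $A\in\mathcal{G}^0$ written as $A=\big(\bigcap_{e\in X_1}r(e)\big)\cup\dots\cup\big(\bigcap_{e\in X_n}r(e)\big)\cup F$ with $X_i\subseteq\mathcal{G}^1$ and $F\subseteq G^0$ finite, set $B_A=\big(\bigcap_{e\in X_1}B_{r(e)}\big)\cup\dots\cup\big(\bigcap_{e\in X_n}B_{r(e)}\big)\cup\bigcup_{v\in F}B_v$; this is well defined and is a basis of $N_A$. *)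

From mathcomp Require Import all_boot all_order all_algebra.
Set Implicit Arguments. Unset Strict Implicit. Unset Printing Implicit Defensive.
Import GRing.Theory.
Local Open Scope ring_scope.

Definition vset (T : Type) := T -> Prop.
Definition vsing (T : Type) (v : T) : vset T := fun w => w = v.
Definition vset0 (T : Type) : vset T := fun _ => False.
Definition vsetU (T : Type) (A B : vset T) : vset T := fun v => A v \/ B v.
Definition vsetI (T : Type) (A B : vset T) : vset T := fun v => A v /\ B v.
Definition vimage (T : Type) (f : T -> T) : vset T := fun x => exists y, x = f y.

(* The ultragraph is (V, E, r, s) with s : E -> V, r : E -> nonempty subsets of V. *)
Inductive G0 (V E : Type) (r : E -> vset V) : vset V -> Prop :=
| G0_sing v : G0 r (vsing v)
| G0_range e : G0 r (r e)
| G0_union A B : G0 r A -> G0 r B -> G0 r (vsetU A B)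
| G0_inter A B : G0 r A -> G0 r B -> G0 r (vsetI A B).

Definition finite_emitter (V E : eqType) (s : E -> V) (v : V) : Prop :=
  exists l : seq E, uniq l /\ forall f, s f = v <-> f \in l.

(* An R-algebra homomorphism pi : L_R(G) -> Hom_R(N) is, by the universal
   property of L_R(G), the same as a family of R-linear endomorphisms
   P A = pi(p_A) (A in G0), S e = pi(s_e), Ss e = pi(s_e^* ) satisfying the
   defining relations of L_R(G). *)
Definition LPA_rep (R : comPzRingType) (V E : eqType) (s : E -> V) (r : E -> vset V)
  (N : lmodType R) (P : vset V -> {linear N -> N}) (S Ss : E -> {linear N -> N}) : Prop :=
  [/\ G0 r (@vset0 V) -> forall x, P (@vset0 V) x = 0,
      forall A B, G0 r A -> G0 r B -> forall x, P A (P B x) = P (vsetI A B) x,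
      forall A B, G0 r A -> G0 r B ->
        forall x, P (vsetU A B) x = P A x + P B x - P (vsetI A B) x
    & [/\ forall e x, P (vsing (s e)) (S e x) = S e x /\ S e (P (r e) x) = S e x,
      forall e x, P (r e) (Ss e x) = Ss e x /\ Ss e (P (vsing (s e)) x) = Ss e x,
      forall e f x, Ss e (S f x) = (if e == f then P (r e) x else 0)
    & forall v (l : seq E), uniq l -> (forall f, s f = v <-> f \in l) -> l != [::] ->
        forall x, P (vsing v) x = \sum_(f <- l) S f (Ss f x) ] ].

Definition is_basis_of (R : comPzRingType) (N : lmodType R) (M Bs : vset N) : Prop :=
  [/\ forall b, Bs b -> M b,
      forall x, M x -> exists (l : seq N) (c : N -> R),
          (forall b, b \in l -> Bs b) /\ x = \sum_(b <- l) c b *: b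
    & forall (l : seq N) (c : N -> R), uniq l -> (forall b, b \in l -> Bs b) ->
          \sum_(b <- l) c b *: b = 0 -> forall b, b \in l -> c b = 0 ].

(* pi is permutative with respect to the bases Bfull (of N), Bv v (of N_v),
   Br e (of N_{r(e)}), Be e (of N_e). *)
Definition permutative (R : comPzRingType) (V E : eqType) (s : E -> V) (r : E -> vset V)
  (N : lmodType R) (P : vset V -> {linear N -> N}) (S Ss : E -> {linear N -> N})
  (Bfull : vset N) (Bv : V -> vset N) (Br Be : E -> vset N) : Prop :=
  [/\ is_basis_of (fun _ => True) Bfull,
      forall v, is_basis_of (vimage (P (vsing v))) (Bv v),
      forall e, is_basis_of (vimage (P (r e))) (Br e),
      forall e, is_basis_of (vimage (fun x => S e (Ss e x))) (Be e)
    & [/\ (forall v h, Bv v h -> Bfull h) /\ (forall e h, Br e h -> Bfull h),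
      forall e v, r e v -> forall h, Bv v h -> Br e h,
      forall e h, Be e h -> Bv (s e) h
      & forall e h, Be e h <-> exists g, Br e g /\ h = S e g ] ].

Definition represents (V E : eqType) (r : E -> vset V) (A : vset V)
  (Xs : seq (seq E)) (F : seq V) : Prop :=
  (forall X, X \in Xs -> X != [::]) /\
  forall v, A v <-> ((exists2 X, X \in Xs & forall e, e \in X -> r e v) \/ v \in F).

(* B_A = (cap_{e in X_1} B_{r e}) u ... u (cap_{e in X_n} B_{r e}) u (cup_{v in F} B_v),
   computed from any representation of A (the paper asserts independence of the
   representation; we take h in B_A iff it lies in the set for every representation). *)
Definition BA (V E : eqType) (r : E -> vset V) (N : Type)
  (Bv : V -> vset N) (Br : E -> vset N) (A : vset V) : vset N :=
  fun h => forall Xs F, represents r A Xs F ->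
    (exists2 X, X \in Xs & forall e, e \in X -> Br e h) \/
    (exists2 v, v \in F & Bv v h).

(* Put v = s e.  A basis vector h lying in some B_f with f <> e is s_f g, so
   s_e^* h = s_e^* s_f g = 0.  Otherwise p_v h = 0: if h is not in B_v this is
   the hypothesis for A = {v}; if it is, then h = p_v h = sum_(s f = v) s_f s_f^* h
   lies in the span of the union of the B_f, a subfamily of the basis B not
   containing h, so h = 0 by linear independence.  Either way
   s_e^* h = s_e^* p_v h = 0. *)

From mathcomp Require Import all_boot all_order all_algebra.
From Stdlib Require Import Classical FunctionalExtensionality PropExtensionality.
Import GRing.Theory.
Local Open Scope ring_scope.

Section Span.

Context {R : comPzRingType} {N : lmodType R}.

Definition in_span (Q : vset N) (x : N) : Prop :=
  exists lp : seq (R * N), (forall p, p \in lp -> Q p.2) /\ x = \sum_(p <- lp) p.1 *: p.2.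

Definition lin_indep (Bs : vset N) : Prop :=
  forall (l : seq N) (c : N -> R), uniq l -> (forall b, b \in l -> Bs b) ->
    \sum_(b <- l) c b *: b = 0 -> forall b, b \in l -> c b = 0.

Lemma in_span_sum (Q : vset N) (I : Type) (r : seq I) (F : I -> N) :
  (forall i, in_span Q (F i)) -> in_span Q (\sum_(i <- r) F i).
Proof.
move=> QF; apply: big_ind => //.
- by exists [::]; rewrite big_nil.
- move=> _ _ [lx [Qx ->]] [ly [Qy ->]]; exists (lx ++ ly).
  split; last by rewrite big_cat.
  by move=> p; rewrite mem_cat => /orP [/Qx | /Qy].
Qed.

Lemma in_span_sub (Q Q' : vset N) (x : N) :
  (forall b, Q b -> Q' b) -> in_span Q x -> in_span Q' x.
Proof. by move=> QQ' [lp [Qlp ->]]; exists lp; split=> // p /Qlp/QQ'. Qed.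

Lemma basis_in_span (M Bs : vset N) (x : N) :
  is_basis_of M Bs -> M x -> in_span Bs x.
Proof.
case=> _ spanM _ /spanM [l [c [lBs ->]]].
exists [seq (c b, b) | b <- l]; rewrite big_map; split=> //.
by move=> _ /mapP [b /lBs ? ->].
Qed.

Lemma sum_scale_undup (lp : seq (R * N)) :
  \sum_(p <- lp) p.1 *: p.2 =
  \sum_(b <- undup (map snd lp)) (\sum_(p <- lp | p.2 == b) p.1) *: b.
Proof.
set U := undup _.
transitivity (\sum_(b <- U) \sum_(p <- lp) (if p.2 == b then p.1 *: p.2 else 0)).
  rewrite exchange_big; apply: eq_big_seq => p lp_p /=.
  have pU : p.2 \in U by rewrite mem_undup map_f.
  rewrite (bigD1_seq p.2) ?undup_uniq //= eqxx big1 ?addr0 // => b.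
  by rewrite eq_sym => /negbTE ->.
apply: eq_bigr => b _; rewrite scaler_suml [RHS]big_mkcond.
by apply: eq_bigr => p _; case: eqP => // ->.
Qed.

(* Moving a [Q]-combination equal to [h] to one side, independence forces the
   coefficient [1] of [h] to vanish; hence the conclusion [h = 0] rather than
   [Q h], which would fail over the zero ring. *)
Lemma lin_indep_in_span {Bs Q : vset N} {h : N} :
  lin_indep Bs -> (forall b, Q b -> Bs b) -> Bs h -> ~ Q h -> in_span Q h -> h = 0.
Proof.
move=> indep QBs Bs_h Qh_neg [lp [Qlp Eh]].
set U := undup (map snd lp).
have U_Q b : b \in U -> Q b by rewrite mem_undup => /mapP [p /Qlp Qp ->].
have hU : h \notin U by apply/negP => /U_Q.
pose c b := if b == h then 1 else - \sum_(p <- lp | p.2 == b) p.1.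
have comb0 : \sum_(b <- h :: U) c b *: b = 0.
  rewrite big_cons {1}/c eqxx scale1r.
  rewrite (eq_big_seq (fun b => - ((\sum_(p <- lp | p.2 == b) p.1) *: b))).
    by rewrite sumrN -sum_scale_undup -Eh subrr.
  by move=> b bU; rewrite /c ifN ?scaleNr //; apply: contraNneq hU => <-.
have : c h = 0.
  apply: (indep (h :: U)) comb0 _ (mem_head _ _); first by rewrite /= hU undup_uniq.
  by move=> b; rewrite inE => /orP [/eqP -> // | /U_Q/QBs].
by rewrite /c eqxx => one0; rewrite -[h]scale1r one0 scale0r.
Qed.

End Span.

Section Representation.

Context {R : comPzRingType} {V E : eqType} {s : E -> V} {r : E -> vset V}.
Context {N : lmodType R} {P : vset V -> {linear N -> N}} {S Ss : E -> {linear N -> N}}.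
Hypothesis rep : LPA_rep s r P S Ss.

Lemma Ss_S_neq (e f : E) (x : N) : e != f -> Ss e (S f x) = 0.
Proof. by case: rep => _ _ _ [_ _ SsS _] /negbTE ef; rewrite SsS ef. Qed.

Lemma Ss_P_source (e : E) (x : N) : Ss e (P (vsing (s e)) x) = Ss e x.
Proof. by case: rep => _ _ _ [_ SsP _ _]; case: (SsP e x). Qed.

Lemma P_vsing_idem (v : V) (x : N) : P (vsing v) (P (vsing v) x) = P (vsing v) x.
Proof.
case: rep => _ PI _ _; rewrite (PI _ _ (G0_sing _ _) (G0_sing _ _)); congr (P _ x).
by apply: functional_extensionality => w; apply: propositional_extensionality; firstorder.
Qed.

Context {Bfull : vset N} {Bv : V -> vset N} {Br Be : E -> vset N}.
Hypothesis perm : permutative s r P S Ss Bfull Bv Br Be.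

Lemma lin_indep_Bfull : lin_indep Bfull.
Proof. by case: perm => [[]]. Qed.

Lemma Be_sub_Bfull (f : E) (b : N) : Be f b -> Bfull b.
Proof. by case: perm => _ _ _ _ [[BvB _] _ BeBv _] /BeBv/BvB. Qed.

Lemma Be_image_S (f : E) (b : N) : Be f b -> exists g, b = S f g.
Proof. by case: perm => _ _ _ _ [_ _ _ BeS] /BeS [g [_ ->]]; exists g. Qed.

Lemma P_vsing_fix (v : V) (h : N) : Bv v h -> P (vsing v) h = h.
Proof.
by case: perm => _ /(_ v) [BvN _ _] _ _ _ /BvN [y ->]; rewrite P_vsing_idem.
Qed.

Lemma P_source_in_span_Be (e : E) (x : N) :
  finite_emitter s (s e) -> in_span (fun b => exists f, Be f b) (P (vsing (s e)) x).
Proof.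
case=> l [l_uniq l_src]; have e_l : e \in l by apply/l_src.
case: rep => _ _ _ [_ _ _ CK]; rewrite (CK _ l) //; last by case: l e_l {l_src l_uniq}.
apply: in_span_sum => f; apply: (in_span_sub (Be f)); first by exists f.
case: perm => _ _ _ /(_ f) BeN _; exact: basis_in_span BeN (ex_intro _ x erefl).
Qed.

Lemma Ss_vanishes_off_Be (e : E) :
  finite_emitter s (s e) ->
  (forall h, Bfull h -> ~ Bv (s e) h -> P (vsing (s e)) h = 0) ->
  forall h, Bfull h -> ~ Be e h -> Ss e h = 0.
Proof.
move=> fin_se Pse_off h Bh Be_h_neg.
have [[f Bf_h] | Be_neg] := classic (exists f, Be f h).
  have [g ->] : exists g, h = S f g by apply: Be_image_S.
  by apply: Ss_S_neq; apply: contra_notN Be_h_neg => /eqP ->.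
suff Pse_h : P (vsing (s e)) h = 0 by rewrite -Ss_P_source Pse_h raddf0.
have [Bv_h | /(Pse_off h Bh) //] := classic (Bv (s e) h).
have fix_h : P (vsing (s e)) h = h by apply: P_vsing_fix.
rewrite fix_h.
apply: (lin_indep_in_span (Q := fun b => exists f, Be f b) lin_indep_Bfull _ Bh Be_neg).
  by move=> b [f /Be_sub_Bfull].
by rewrite -fix_h; apply: P_source_in_span_Be.
Qed.

End Representation.

Lemma BA_vsing {V E : eqType} {r : E -> vset V} {N : Type} {Bv : V -> vset N}
  {Br : E -> vset N} {v : V} {h : N} :
  BA r Bv Br (vsing v) h -> Bv v h.
Proof.
have rep_v : represents r (vsing v) [::] [:: v].
  split=> // w; rewrite inE; split=> [-> | [[X] | /eqP //]]; last by rewrite in_nil.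
  by right.
by case/(_ _ _ rep_v) => [[X] | [w]]; rewrite ?in_nil // inE => /eqP ->.
Qed.

Theorem mainTheorem9 (R : comPzRingType) (V E : eqType) (s : E -> V) (r : E -> vset V)
  (N : lmodType R) (P : vset V -> {linear N -> N}) (S Ss : E -> {linear N -> N})
  (Bfull : vset N) (Bv : V -> vset N) (Br Be : E -> vset N) :
  (forall e, exists v, r e v) ->
  LPA_rep s r P S Ss ->
  permutative s r P S Ss Bfull Bv Br Be ->
  (forall e, finite_emitter s (s e) ->
     (forall A, G0 r A -> forall h, Bfull h -> ~ BA r Bv Br A h -> P A h = 0) ->
     forall h, Bfull h -> ~ Be e h -> Ss e h = 0)
  /\
  ((forall v, finite_emitter s v) ->
     (forall A, G0 r A -> forall h, Bfull h -> ~ BA r Bv Br A h -> P A h = 0) ->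
     forall e h, Bfull h -> ~ Be e h -> Ss e h = 0).
Proof.
move=> _ rep perm.
have off_Be e : finite_emitter s (s e) ->
    (forall A, G0 r A -> forall h, Bfull h -> ~ BA r Bv Br A h -> P A h = 0) ->
    forall h, Bfull h -> ~ Be e h -> Ss e h = 0.
  move=> fin_se P_off; apply: (Ss_vanishes_off_Be rep perm e fin_se) => h Bh Bv_neg.
  by apply: (P_off _ (G0_sing r (s e)) h Bh) => /BA_vsing.
by split=> // fin P_off e; apply: off_Be.
Qed.
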